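(* Let $P=\{p_1,\dots,p_n\}$ be weighted points in $\mathbb{R}^2$ with total weight $1$, let $S=\{s_1,\dots,s_m\}$ be line segments in $\mathbb{R}^2$ of total length $1$, let $\delta>0$, and let $Q$ be the set of subsegments produced by the subdivision procedure in the context. Then $|Q|=O\!\left(\frac{nm}{\delta}\log\frac1\delta\right)$.
   Context: Subdivision procedure: starting with the segments of $S$, repeatedly, for each current subsegment $s'$: if there is a point of $P$ such that all of $s'$ lies within Euclidean distance $\delta/(nm)$ of it, leave $s'$ as is; otherwise, if there is a point $p\in P$ for which the ratio between the largest and the smallest distance from $p$ to points of $s'$ exceeds $1+\delta$, cut $s'$ into two halves. $Q$ is the final set of subsegments. *)

From Stdlib Require Import Reals Lra List Arith.
From Coquelicot Require Import Coquelicot.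
Open Scope R_scope.

Definition pt : Type := (R * R)%type.

Definition dist2 (p q : pt) : R :=
  sqrt ((fst p - fst q) ^ 2 + (snd p - snd q) ^ 2).

Definition segment : Type := (pt * pt)%type.

Definition seg_len (s : segment) : R := dist2 (fst s) (snd s).

Definition lerp (s : segment) (t : R) : pt :=
  (fst (fst s) + t * (fst (snd s) - fst (fst s)),
   snd (fst s) + t * (snd (snd s) - snd (fst s))).

Definition on_seg (s : segment) (x : pt) : Prop :=
  exists t, 0 <= t <= 1 /\ x = lerp s t.

Definition max_dist (p : pt) (s : segment) : Rbar :=
  Lub_Rbar (fun r => exists x, on_seg s x /\ r = dist2 p x).
Definition min_dist (p : pt) (s : segment) : Rbar :=
  Glb_Rbar (fun r => exists x, on_seg s x /\ r = dist2 p x).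

Definition within (p : pt) (s : segment) (eps : R) : Prop :=
  forall x, on_seg s x -> dist2 p x <= eps.

(* the ratio largest/smallest distance from p to s exceeds 1+delta
   (written multiplicatively; a smallest distance 0 with a positive largest
   distance counts as an infinite ratio) *)
Definition ratio_exceeds (p : pt) (s : segment) (delta : R) : Prop :=
  Rbar_lt (Rbar_mult (Finite (1 + delta)) (min_dist p s)) (max_dist p s).

(* The subdivision rule: a current subsegment s' is cut into two halves iff
   no point of P has all of s' within delta/(nm), and some point of P has
   distance ratio exceeding 1+delta. *)
Definition cut (n m : nat) (P : nat -> pt) (delta : R) (s : segment) : Prop :=
  ~ (exists i, (i < n)%nat /\ within (P i) s (delta / (INR n * INR m))) /\
  (exists i, (i < n)%nat /\ ratio_exceeds (P i) s delta).

Definition piece (s : segment) (k i : nat) : segment :=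
  (lerp s (INR i / 2 ^ k), lerp s (INR (S i) / 2 ^ k)).

(* (j,k,i) is a final subsegment (element of Q): the i-th level-k dyadic piece
   of segment S j, all of whose ancestors were cut and which is not cut. *)
Definition final_piece (n m : nat) (P : nat -> pt) (S : nat -> segment)
    (delta : R) (jki : nat * nat * nat) : Prop :=
  let '(j, k, i) := jki in
  (j < m)%nat /\ (i < 2 ^ k)%nat /\
  (forall k', (k' < k)%nat ->
     cut n m P delta (piece (S j) k' (Nat.div i (2 ^ (k - k'))))) /\
  ~ cut n m P delta (piece (S j) k i).

Definition sumR (n : nat) (f : nat -> R) : R :=
  fold_right Rplus 0 (map f (seq 0 n)).

From Pilot Require Import Defs.
From Stdlib Require Import Reals Rgeom Lra Lia List Classical ClassicalDescription.
From Coquelicot Require Import Coquelicot.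
Import ListNotations.
Open Scope R_scope.

(* A piece that is cut has a point within [2 |piece| / delta] of some [p] of [P] (otherwise
   all distances from [p] agree up to a factor [1 + delta]) and a point farther than
   [delta / (n m)] from it, so [delta^2 / (n m) < 3 |piece|]: on a segment of length [L]
   only the levels with [2^k < 3 L n m / delta^2] are cut.  At a given level the pieces
   cut because of [p] lie within [O(|piece| / delta)] of [p], hence at most
   [O(n / delta)] pieces per level are cut.  Summing [min (2^k, 6 n / delta)] over the
   admissible levels gives [O((n / delta) (1 + log (L m / delta)))] per segment, and
   [sum L = 1] together with [log (1 + x) <= x] yields [O((n m / delta) log (1 / delta))]. *)

Lemma dist2_euc p q : dist2 p q = dist_euc (fst p) (snd p) (fst q) (snd q).
Proof. unfold dist2, dist_euc, Rsqr. f_equal. ring. Qed.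

Lemma dist2_ge0 p q : 0 <= dist2 p q.
Proof. apply sqrt_pos. Qed.

Lemma dist2_sym p q : dist2 p q = dist2 q p.
Proof. rewrite !dist2_euc. apply distance_symm. Qed.

Lemma dist2_triangle p q r : dist2 p r <= dist2 p q + dist2 q r.
Proof. rewrite !dist2_euc. apply triangle. Qed.

Lemma dist2_lerp s a b : dist2 (lerp s a) (lerp s b) = Rabs (a - b) * seg_len s.
Proof.
  destruct s as [[x1 y1] [x2 y2]]; unfold seg_len, dist2, lerp; cbn [fst snd].
  rewrite <- sqrt_Rsqr_abs, <- sqrt_mult_alt by apply Rle_0_sqr.
  f_equal. unfold Rsqr. ring.
Qed.

Lemma on_seg_dist2_le s x y : on_seg s x -> on_seg s y -> dist2 x y <= seg_len s.
Proof.
  intros [t [Ht ->]] [u [Hu ->]]. rewrite dist2_lerp.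
  assert (Rabs (t - u) <= 1) by (apply Rabs_le; lra).
  pose proof (dist2_ge0 (fst s) (snd s)). unfold seg_len. nra.
Qed.

Lemma lerp_piece s k i u : lerp (piece s k i) u = lerp s ((INR i + u) / 2 ^ k).
Proof.
  pose proof (pow_lt 2 k Rlt_0_2).
  unfold piece, lerp; cbn [fst snd]. rewrite S_INR. f_equal; field; lra.
Qed.

Lemma seg_len_piece s k i : seg_len (piece s k i) = seg_len s / 2 ^ k.
Proof.
  pose proof (pow_lt 2 k Rlt_0_2).
  unfold seg_len at 1, piece; cbn [fst snd]. rewrite dist2_lerp, S_INR.
  replace (INR i / 2 ^ k - (INR i + 1) / 2 ^ k) with (- / 2 ^ k) by (field; lra).
  rewrite Rabs_Ropp, Rabs_pos_eq by (apply Rlt_le, Rinv_0_lt_compat; lra).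
  field. lra.
Qed.

Lemma piece_index_gap s k i1 i2 x1 x2 :
  on_seg (piece s k i1) x1 -> on_seg (piece s k i2) x2 ->
  (INR i1 - INR i2 - 1) * (seg_len s / 2 ^ k) <= dist2 x1 x2.
Proof.
  pose proof (pow_lt 2 k Rlt_0_2).
  intros [u1 [Hu1 ->]] [u2 [Hu2 ->]]. rewrite !lerp_piece, dist2_lerp.
  replace ((INR i1 + u1) / 2 ^ k - (INR i2 + u2) / 2 ^ k)
    with ((INR i1 + u1 - INR i2 - u2) / 2 ^ k) by (field; lra).
  rewrite Rabs_div, (Rabs_pos_eq (2 ^ k)) by lra.
  pose proof (Rle_abs (INR i1 + u1 - INR i2 - u2)).
  pose proof (dist2_ge0 (fst s) (snd s)).
  assert (0 <= seg_len s / 2 ^ k) by (apply Rdiv_le_0_compat; unfold seg_len; lra).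
  replace (Rabs (INR i1 + u1 - INR i2 - u2) / 2 ^ k * seg_len s)
    with (Rabs (INR i1 + u1 - INR i2 - u2) * (seg_len s / 2 ^ k)) by (field; lra).
  nra.
Qed.

Lemma min_dist_spec p s : exists g, min_dist p s = Finite g /\
  forall r, (forall x, on_seg s x -> r <= dist2 p x) -> r <= g.
Proof.
  unfold min_dist.
  destruct (Glb_Rbar_correct (fun r => exists x, on_seg s x /\ r = dist2 p x)) as [Hlb Hglb].
  assert (H0 : on_seg s (lerp s 0)) by (exists 0; split; [lra | reflexivity]).
  destruct (Glb_Rbar _) as [g | |] eqn:Eg.
  - exists g. split; [reflexivity|].
    intros r Hr. apply (Hglb (Finite r)). intros _ [x [Hx ->]]. exact (Hr x Hx).
  - destruct (Hlb _ (ex_intro _ _ (conj H0 eq_refl))).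
  - destruct (Hglb (Finite 0)). intros _ [x [_ ->]]. apply dist2_ge0.
Qed.

Lemma max_dist_le p s r : (forall x, on_seg s x -> dist2 p x <= r) ->
  Rbar_le (max_dist p s) (Finite r).
Proof.
  intros Hr. apply (proj2 (Lub_Rbar_correct _)). intros _ [x [Hx ->]]. exact (Hr x Hx).
Qed.

Lemma not_within_far p s eps : ~ Defs.within p s eps ->
  exists y, on_seg s y /\ eps < dist2 p y.
Proof.
  intros Hw. apply NNPP. intros Hfar. apply Hw. intros y Hy.
  apply Rnot_lt_le. intros Hlt. exact (Hfar (ex_intro _ y (conj Hy Hlt))).
Qed.

(* If every point of [s] were at distance [>= 2 |s| / delta] from [p], the distances
   would range over an interval [g, g + |s|] with [|s| <= delta g / 2]. *)
Lemma ratio_exceeds_near p s delta : 0 < delta -> ratio_exceeds p s delta ->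
  exists x, on_seg s x /\ delta * dist2 p x < 2 * seg_len s.
Proof.
  intros Hd Hr. apply NNPP. intros Hfar.
  assert (Hfar' : forall x, on_seg s x -> 2 * seg_len s / delta <= dist2 p x).
  { intros x Hx. apply Rnot_lt_le. intros Hlt. apply Hfar. exists x. split; [exact Hx|].
    apply (Rmult_lt_compat_l delta) in Hlt; [|exact Hd].
    replace (delta * (2 * seg_len s / delta)) with (2 * seg_len s) in Hlt by (field; lra).
    exact Hlt. }
  destruct (min_dist_spec p s) as [g [Eg Hglb]].
  unfold ratio_exceeds in Hr. rewrite Eg in Hr.
  assert (Hspread : forall y, on_seg s y -> dist2 p y - seg_len s <= g).
  { intros y Hy. apply Hglb. intros x Hx.
    pose proof (dist2_triangle p x y). pose proof (on_seg_dist2_le s x y Hx Hy). lra. }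
  assert (Hg : 2 * seg_len s / delta <= g) by exact (Hglb _ Hfar').
  assert (Hgd : 2 * seg_len s <= delta * g).
  { apply (Rmult_le_compat_l delta) in Hg; [|lra].
    replace (delta * (2 * seg_len s / delta)) with (2 * seg_len s) in Hg by (field; lra).
    exact Hg. }
  assert (HL : 0 <= seg_len s) by apply dist2_ge0.
  apply (Rbar_lt_not_le _ _ Hr). apply max_dist_le. intros y Hy.
  pose proof (Hspread y Hy). lra.
Qed.

Lemma cut_near n m P delta s : 0 < delta -> cut n m P delta s ->
  exists i, (i < n)%nat /\ exists x, on_seg s x /\ delta * dist2 (P i) x < 2 * seg_len s.
Proof.
  intros Hd [_ [i [Hi Hr]]]. exists i. split; [exact Hi|].
  exact (ratio_exceeds_near _ _ _ Hd Hr).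
Qed.

Lemma cut_not_short n m P delta s : 0 < delta <= 1 -> cut n m P delta s ->
  delta / (INR n * INR m) * delta < 3 * seg_len s.
Proof.
  intros Hd [Hnw [i [Hi Hr]]].
  destruct (ratio_exceeds_near _ _ _ (proj1 Hd) Hr) as [x [Hx Hnear]].
  assert (Hw : ~ Defs.within (P i) s (delta / (INR n * INR m))) by eauto.
  destruct (not_within_far _ _ _ Hw) as [y [Hy Hfar]].
  pose proof (dist2_triangle (P i) x y). pose proof (on_seg_dist2_le s x y Hx Hy).
  assert (HL : 0 <= seg_len s) by apply dist2_ge0.
  apply Rmult_lt_compat_r with (r := delta) in Hfar; [|lra].
  assert (delta * seg_len s <= seg_len s) by nra. nra.
Qed.

Lemma cut_piece_level n m P delta s k i : (1 <= n)%nat -> (1 <= m)%nat -> 0 < delta <= 1 ->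
  cut n m P delta (piece s k i) -> 2 ^ k < 3 * seg_len s * INR n * INR m / delta ^ 2.
Proof.
  intros Hn Hm Hd Hcut.
  pose proof (cut_not_short _ _ _ _ _ Hd Hcut) as Hshort. rewrite seg_len_piece in Hshort.
  apply le_INR in Hn, Hm. simpl in Hn, Hm. pose proof (pow_lt 2 k Rlt_0_2).
  set (N := INR n * INR m) in *. assert (HN : 1 <= N) by (unfold N; nra).
  assert (Hpos : 0 < delta / N * delta).
  { apply Rmult_lt_0_compat; [apply Rdiv_lt_0_compat|]; lra. }
  apply (Rmult_lt_reg_r _ _ _ Hpos).
  replace (3 * seg_len s * INR n * INR m / delta ^ 2 * (delta / N * delta))
    with (3 * seg_len s) by (unfold N; field; repeat split; lra).
  apply (Rmult_lt_compat_l (2 ^ k)) in Hshort; [|lra].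
  replace (2 ^ k * (3 * (seg_len s / 2 ^ k))) with (3 * seg_len s) in Hshort by (field; lra).
  lra.
Qed.

Definition asbool (A : Prop) : bool := if excluded_middle_informative A then true else false.

Lemma asboolP (A : Prop) : asbool A = true <-> A.
Proof. unfold asbool. destruct (excluded_middle_informative A); split; auto; discriminate. Qed.

Lemma INR_list_sum {A} (g : A -> nat) l :
  INR (list_sum (map g l)) = fold_right Rplus 0 (map (fun x => INR (g x)) l).
Proof. induction l as [|a l IH]; [reflexivity|]. simpl. rewrite plus_INR, IH. reflexivity. Qed.

Lemma sumR_S N f : sumR (S N) f = sumR N f + f N.
Proof.
  unfold sumR. rewrite seq_S, map_app, fold_right_app. simpl.
  induction (map f (seq 0 N)) as [|a l IH]; simpl; [ring|]. rewrite IH. ring.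
Qed.

Lemma sumR_ext N f g : (forall k, f k = g k) -> sumR N f = sumR N g.
Proof. intros H. unfold sumR. f_equal. apply map_ext, H. Qed.

Lemma sumR_le N f g : (forall k, (k < N)%nat -> f k <= g k) -> sumR N f <= sumR N g.
Proof.
  induction N as [|N IH]; intros H; [unfold sumR; simpl; lra|].
  rewrite !sumR_S. apply Rplus_le_compat; auto.
Qed.

Lemma sumR_plus N f g : sumR N (fun k => f k + g k) = sumR N f + sumR N g.
Proof. induction N as [|N IH]; [unfold sumR; simpl; ring|]. rewrite !sumR_S, IH. ring. Qed.

Lemma sumR_scal N c f : sumR N (fun k => c * f k) = c * sumR N f.
Proof. induction N as [|N IH]; [unfold sumR; simpl; ring|]. rewrite !sumR_S, IH. ring. Qed.

Lemma sumR_const N c : sumR N (fun _ => c) = INR N * c.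
Proof. induction N as [|N IH]; [unfold sumR; simpl; ring|]. rewrite sumR_S, IH, S_INR. ring. Qed.

Lemma sumR_telescope N f : sumR N (fun k => f (S k) - f k) = f N - f O.
Proof. induction N as [|N IH]; [unfold sumR; simpl; ring|]. rewrite sumR_S, IH. ring. Qed.

Lemma sumR_term N f a : (forall k, (k < N)%nat -> 0 <= f k) -> (a < N)%nat -> f a <= sumR N f.
Proof.
  induction N as [|N IH]; intros H Ha; [lia|]. rewrite sumR_S.
  assert (0 <= sumR N f).
  { rewrite <- (Rmult_0_r (INR N)), <- sumR_const. apply sumR_le. auto. }
  destruct (Nat.eq_dec a N) as [->|Hne]; [lra|].
  pose proof (IH (fun k Hk => H k (Nat.lt_lt_succ_r _ _ Hk)) ltac:(lia)).
  pose proof (H N (Nat.lt_succ_diag_r N)). lra.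
Qed.

Lemma length_le_cover {A} (l : list A) (Q : nat -> A -> Prop) (n : nat) (W : R) :
  NoDup l -> (forall x, In x l -> exists i, (i < n)%nat /\ Q i x) ->
  (forall i l', (i < n)%nat -> NoDup l' -> (forall x, In x l' -> Q i x) -> INR (length l') <= W) ->
  INR (length l) <= INR n * W.
Proof.
  intros Hnd Hcov Hclass.
  set (classes := flat_map (fun i => filter (fun x => asbool (Q i x)) l) (seq 0 n)).
  assert (Hincl : incl l classes).
  { intros x Hx. destruct (Hcov x Hx) as [i [Hi HQ]].
    apply in_flat_map. exists i. split; [apply in_seq; lia|].
    apply filter_In. split; [exact Hx|]. apply asboolP, HQ. }
  pose proof (le_INR _ _ (NoDup_incl_length Hnd Hincl)) as Hlen.
  eapply Rle_trans; [exact Hlen|]. unfold classes. rewrite length_flat_map, INR_list_sum.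
  rewrite <- sumR_const. apply sumR_le. intros i Hi. apply (Hclass i); [exact Hi| |].
  - apply NoDup_filter, Hnd.
  - intros x Hx. apply filter_In in Hx. apply asboolP, Hx.
Qed.

Lemma nat_list_bounds (l : list nat) : l <> [] ->
  exists a b, In a l /\ In b l /\ forall x, In x l -> (a <= x <= b)%nat.
Proof.
  induction l as [|y l IH]; intros Hne; [congruence|].
  destruct l as [|z l].
  - exists y, y. simpl. intuition (subst; lia).
  - destruct IH as (a & b & Ha & Hb & Hab); [discriminate|].
    exists (Nat.min y a), (Nat.max y b). split; [|split].
    + destruct (Nat.min_spec y a) as [[_ ->]|[_ ->]]; simpl; auto.
    + destruct (Nat.max_spec y b) as [[_ ->]|[_ ->]]; simpl; auto.
    + intros x [<-|Hx]; [lia|]. specialize (Hab x Hx). lia.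
Qed.

Lemma length_window (l : list nat) (W : R) : 0 <= W -> NoDup l ->
  (forall x y, In x l -> In y l -> INR x - INR y < W) -> INR (length l) <= W + 1.
Proof.
  intros HW Hnd Hgap. destruct l as [|z l'] eqn:El; [simpl; lra|]. rewrite <- El in *.
  destruct (nat_list_bounds l) as (a & b & Ha & Hb & Hab); [rewrite El; discriminate|].
  assert (Hincl : incl l (seq a (S (b - a)))).
  { intros x Hx. apply in_seq. specialize (Hab x Hx). lia. }
  pose proof (le_INR _ _ (NoDup_incl_length Hnd Hincl)) as Hlen.
  rewrite length_seq, S_INR, minus_INR in Hlen by (apply Hab; exact Ha).
  specialize (Hgap b a Hb Ha). lra.
Qed.

Definition near_piece (p : pt) (delta : R) (s : segment) (k i : nat) : Prop :=
  exists x, on_seg (piece s k i) x /\ delta * dist2 p x < 2 * (seg_len s / 2 ^ k).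

(* Two pieces both within [2 |piece| / delta] of [p] are within [4 |piece| / delta] of
   each other, hence at most [4 / delta + 1] indices apart. *)
Lemma near_pieces_length p delta s k (l : list nat) : 0 < delta -> NoDup l ->
  (forall i, In i l -> near_piece p delta s k i) -> INR (length l) <= 4 / delta + 2.
Proof.
  intros Hd Hnd Hnear. replace (4 / delta + 2) with ((4 / delta + 1) + 1) by ring.
  apply length_window; [apply Rlt_le, Rplus_lt_0_compat; [apply Rdiv_lt_0_compat|]; lra|exact Hnd|].
  intros i1 i2 H1 H2.
  destruct (Hnear i1 H1) as [x1 [Hx1 Hd1]]. destruct (Hnear i2 H2) as [x2 [Hx2 Hd2]].
  pose proof (piece_index_gap s k i1 i2 x1 x2 Hx1 Hx2) as Hgap.
  pose proof (dist2_triangle x1 p x2) as Htri. rewrite (dist2_sym x1 p) in Htri.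
  set (len := seg_len s / 2 ^ k) in *.
  assert (Hlen : 0 < len) by (pose proof (dist2_ge0 p x1); nra).
  apply (Rmult_le_compat_r delta) in Hgap; [|lra].
  apply (Rmult_le_compat_r delta) in Htri; [|lra].
  assert (Hgap' : (INR i1 - INR i2 - 1) * delta * len < 4 * len) by lra.
  assert (Hgap'' : (INR i1 - INR i2 - 1) * delta < 4).
  { apply (Rmult_lt_reg_r len); [exact Hlen|]. lra. }
  apply (Rmult_lt_reg_r delta); [exact Hd|].
  replace ((4 / delta + 1) * delta) with (4 + delta) by (field; lra). lra.
Qed.

Definition cut_indices n m P delta s k : list nat :=
  filter (fun i => asbool (cut n m P delta (piece s k i))) (seq 0 (2 ^ k)).

Lemma In_cut_indices n m P delta s k i :
  In i (cut_indices n m P delta s k) <-> (i < 2 ^ k)%nat /\ cut n m P delta (piece s k i).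
Proof.
  unfold cut_indices. rewrite filter_In, in_seq, asboolP. intuition lia.
Qed.

Lemma cut_indices_length_le_pow n m P delta s k :
  INR (length (cut_indices n m P delta s k)) <= 2 ^ k.
Proof.
  rewrite <- (pow_INR 2). apply le_INR.
  pose proof (filter_length_le (fun i => asbool (cut n m P delta (piece s k i))) (seq 0 (2 ^ k)))
    as Hle.
  rewrite length_seq in Hle. exact Hle.
Qed.

Lemma cut_indices_length_le_window n m P delta s k : 0 < delta ->
  INR (length (cut_indices n m P delta s k)) <= INR n * (4 / delta + 2).
Proof.
  intros Hd. apply (length_le_cover _ (fun i0 i => near_piece (P i0) delta s k i)).
  - apply NoDup_filter, seq_NoDup.
  - intros i Hi. apply In_cut_indices in Hi as [_ Hcut].
    destruct (cut_near _ _ _ _ _ Hd Hcut) as [i0 [Hi0 Hnear]].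
    rewrite seg_len_piece in Hnear. exists i0. split; assumption.
  - intros i0 l _. apply near_pieces_length, Hd.
Qed.

Lemma cut_indices_level n m P delta s k : (1 <= n)%nat -> (1 <= m)%nat -> 0 < delta <= 1 ->
  0 < INR (length (cut_indices n m P delta s k)) ->
  2 ^ k < 3 * seg_len s * INR n * INR m / delta ^ 2.
Proof.
  intros Hn Hm Hd Hpos.
  destruct (cut_indices n m P delta s k) as [|i l] eqn:E; [simpl in Hpos; lra|].
  assert (Hi : In i (cut_indices n m P delta s k)) by (rewrite E; left; reflexivity).
  apply In_cut_indices in Hi as [_ Hcut]. exact (cut_piece_level _ _ _ _ _ _ _ Hn Hm Hd Hcut).
Qed.

Lemma ln2_pos : 0 < ln 2.
Proof. pose proof ln_lt_2. lra. Qed.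

Lemma doubling_step (c t B X : R) : 0 < t -> 1 <= B ->
  0 <= c -> c <= t -> c <= B -> (0 < c -> t < X) ->
  c <= (Rmin (2 * t) (2 * B) - Rmin t (2 * B)) +
       B / ln 2 * (ln (Rmax B (Rmin (2 * t) (2 * X))) - ln (Rmax B (Rmin t (2 * X)))).
Proof.
  intros Ht HB Hc0 Hct HcB HX. pose proof ln2_pos.
  assert (Hlin : Rmin t (2 * B) <= Rmin (2 * t) (2 * B)).
  { unfold Rmin; repeat destruct Rle_dec; lra. }
  assert (Hlog : 0 <= B / ln 2 *
                      (ln (Rmax B (Rmin (2 * t) (2 * X))) - ln (Rmax B (Rmin t (2 * X))))).
  { apply Rmult_le_pos; [apply Rdiv_le_0_compat; lra|].
    apply Rge_le, Rge_minus, Rle_ge, ln_le; unfold Rmax, Rmin; repeat destruct Rle_dec; lra. }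
  destruct (Req_dec c 0) as [->|Hc]; [lra|].
  assert (HtX : t < X) by (apply HX; lra).
  destruct (Rle_or_lt t B) as [HtB|HBt].
  - replace (Rmin (2 * t) (2 * B)) with (2 * t) by (unfold Rmin; destruct Rle_dec; lra).
    replace (Rmin t (2 * B)) with t by (unfold Rmin; destruct Rle_dec; lra). lra.
  - replace (Rmax B (Rmin (2 * t) (2 * X))) with (2 * t)
      by (unfold Rmax, Rmin; repeat destruct Rle_dec; lra).
    replace (Rmax B (Rmin t (2 * X))) with t by (unfold Rmax, Rmin; repeat destruct Rle_dec; lra).
    rewrite ln_mult by lra.
    replace (B / ln 2 * (ln 2 + ln t - ln t)) with B by (field; lra). lra.
Qed.

(* Levels with [2^k < B] contribute a geometric sum, bounded by the first (linear)
   potential; the remaining levels with [B <= 2^k < X] contribute at most [B] each, and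
   there are at most [log2 (2X / B)] of them, which the second (logarithmic) potential counts. *)
Lemma capped_doubling_sum (c : nat -> R) (B X : R) (K : nat) : 1 <= B ->
  (forall k, 0 <= c k) -> (forall k, c k <= 2 ^ k) -> (forall k, c k <= B) ->
  (forall k, 0 < c k -> 2 ^ k < X) ->
  sumR K c <= 2 * B + B / ln 2 * (ln (Rmax B (2 * X)) - ln B).
Proof.
  intros HB Hc0 Hcpow HcB HcX. pose proof ln2_pos.
  set (lin := fun k : nat => Rmin (2 ^ k) (2 * B)).
  set (log := fun k : nat => ln (Rmax B (Rmin (2 ^ k) (2 * X)))).
  apply Rle_trans with (sumR K (fun k => (lin (S k) - lin k) + B / ln 2 * (log (S k) - log k))).
  { apply sumR_le. intros k _. unfold lin, log. change (2 ^ S k) with (2 * 2 ^ k).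
    apply doubling_step; auto. apply pow_lt. lra. }
  rewrite sumR_plus, sumR_scal, !sumR_telescope.
  assert (Hlin : lin K - lin O <= 2 * B)
    by (unfold lin; simpl; unfold Rmin; repeat destruct Rle_dec; lra).
  assert (Hlog0 : log O = ln B).
  { unfold log. f_equal. simpl. unfold Rmax, Rmin; repeat destruct Rle_dec; lra. }
  assert (HlogK : log K <= ln (Rmax B (2 * X))).
  { apply ln_le; unfold Rmax, Rmin; repeat destruct Rle_dec; lra. }
  assert (0 <= B / ln 2) by (apply Rdiv_le_0_compat; lra).
  rewrite Hlog0. apply Rplus_le_compat; [exact Hlin|]. apply Rmult_le_compat_l; lra.
Qed.

Lemma ln_1p_le x : 0 <= x -> ln (1 + x) <= x.
Proof.
  intros Hx. destruct (Req_dec x 0) as [->|Hx0]; [rewrite Rplus_0_r, ln_1; lra|].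
  rewrite <- (ln_exp x) at 2. apply ln_le; [lra|]. left. apply exp_ineq1, Hx0.
Qed.

Lemma cut_levels_sum n m P delta s K : (1 <= n)%nat -> (1 <= m)%nat -> 0 < delta <= 1 ->
  sumR K (fun k => INR (length (cut_indices n m P delta s k))) <=
  2 * (6 * INR n / delta) + 6 * INR n / delta / ln 2 * (seg_len s * INR m + ln (1 / delta)).
Proof.
  intros Hn Hm Hd. pose proof ln2_pos.
  pose proof (le_INR _ _ Hn) as HnR. pose proof (le_INR _ _ Hm) as HmR. simpl in HnR, HmR.
  assert (HL : 0 <= seg_len s) by apply dist2_ge0.
  set (B := 6 * INR n / delta). set (X := 3 * seg_len s * INR n * INR m / delta ^ 2).
  assert (HB : 1 <= B).
  { unfold B. apply (Rmult_le_reg_r delta); [lra|]. field_simplify; lra. }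
  eapply Rle_trans; [apply (capped_doubling_sum _ B X); auto|].
  - intros k. apply pos_INR.
  - intros k. apply cut_indices_length_le_pow.
  - intros k. eapply Rle_trans; [apply cut_indices_length_le_window; lra|].
    unfold B. replace (6 * INR n / delta) with (INR n * (4 / delta + 2 / delta)) by (field; lra).
    apply Rmult_le_compat_l; [lra|]. apply Rplus_le_compat_l.
    apply (Rmult_le_reg_r delta); [lra|]. field_simplify; lra.
  - intros k. apply cut_indices_level; assumption.
  - apply Rplus_le_compat_l, Rmult_le_compat_l; [apply Rdiv_le_0_compat; lra|].
    assert (Hspan : Rmax B (2 * X) <= B * ((1 + seg_len s * INR m) * (1 / delta))).
    { assert (H2X : 2 * X = B * (seg_len s * INR m * (1 / delta))) by (unfold X, B; field; lra).
      assert (Hid : 1 <= 1 / delta) by (apply (Rmult_le_reg_r delta); [lra|]; field_simplify; lra).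
      assert (0 <= seg_len s * INR m) by nra.
      assert (1 <= (1 + seg_len s * INR m) * (1 / delta)) by nra.
      assert (0 <= B * (1 / delta)) by nra.
      apply Rmax_lub; [|rewrite H2X]; nra. }
    apply ln_le in Hspan; [|unfold Rmax; destruct Rle_dec; lra].
    assert (0 < 1 / delta) by (apply Rdiv_lt_0_compat; lra).
    assert (0 <= seg_len s * INR m) by nra.
    rewrite !ln_mult in Hspan by (try apply Rmult_lt_0_compat; lra).
    pose proof (ln_1p_le (seg_len s * INR m) ltac:(nra)). lra.
Qed.

Lemma cut_depth_bound n m P delta : (1 <= n)%nat -> (1 <= m)%nat -> 0 < delta <= 1 ->
  exists K, forall s k i, seg_len s <= 1 -> cut n m P delta (piece s k i) -> (k < K)%nat.
Proof.
  intros Hn Hm Hd. destruct (INR_unbounded (3 * INR n * INR m / delta ^ 2)) as [K HK].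
  exists K. intros s k i Hs Hcut.
  pose proof (cut_piece_level _ _ _ _ _ _ _ Hn Hm Hd Hcut) as Hlevel.
  assert (Hshort : 3 * seg_len s * INR n * INR m / delta ^ 2 <= 3 * INR n * INR m / delta ^ 2).
  { pose proof (pos_INR n). pose proof (pos_INR m). pose proof (dist2_ge0 (fst s) (snd s)).
    unfold Rdiv. apply Rmult_le_compat_r; [apply Rlt_le, Rinv_0_lt_compat, pow_lt; lra|].
    assert (0 <= INR n * INR m) by (apply Rmult_le_pos; lra).
    unfold seg_len in *. nra. }
  assert (HK2 : INR K < 2 ^ K).
  { rewrite <- (pow_INR 2). apply lt_INR, Nat.pow_gt_lin_r. lia. }
  destruct (Nat.lt_ge_cases k K) as [Hlt|Hge]; [exact Hlt|].
  pose proof (Rle_pow 2 K k ltac:(lra) Hge). lra.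
Qed.

Definition final_piece_candidates n m P (segs : nat -> segment) delta K : list (nat * nat * nat) :=
  map (fun j => (j, O, O)) (seq 0 m) ++
  flat_map (fun j => flat_map (fun k =>
      flat_map (fun i => [(j, S k, 2 * i); (j, S k, 2 * i + 1)]%nat)
        (cut_indices n m P delta (segs j) k)) (seq 0 K)) (seq 0 m).

(* A final piece at level [k + 1] is a child of the cut piece [(j, k, i / 2)]. *)
Lemma final_piece_in_candidates n m P segs delta K x :
  (forall j k i, (j < m)%nat -> cut n m P delta (piece (segs j) k i) -> (k < K)%nat) ->
  final_piece n m P segs delta x -> In x (final_piece_candidates n m P segs delta K).
Proof.
  intros HK. destruct x as [[j [|k]] i]; intros [Hj [Hi [Hanc _]]]; apply in_app_iff.
  - left. simpl in Hi. assert (i = O) as -> by lia.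
    apply (in_map (fun j => (j, O, O))), in_seq. lia.
  - right. specialize (Hanc k (Nat.lt_succ_diag_r k)).
    replace (S k - k)%nat with 1%nat in Hanc by lia.
    apply in_flat_map. exists j. split; [apply in_seq; lia|].
    apply in_flat_map. exists k. split; [apply in_seq; specialize (HK _ _ _ Hj Hanc); lia|].
    apply in_flat_map. exists (i / 2)%nat. split.
    + apply In_cut_indices. split; [|exact Hanc].
      apply Nat.Div0.div_lt_upper_bound. simpl in Hi. lia.
    + pose proof (Nat.div_mod i 2 ltac:(lia)). pose proof (Nat.mod_upper_bound i 2 ltac:(lia)).
      destruct (i mod 2)%nat as [|[|r]]; [left|right; left|lia]; f_equal; lia.
Qed.

Lemma final_piece_candidates_length n m P segs delta K :
  INR (length (final_piece_candidates n m P segs delta K)) =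
  INR m + 2 * sumR m (fun j => sumR K (fun k => INR (length (cut_indices n m P delta (segs j) k)))).
Proof.
  unfold final_piece_candidates.
  rewrite length_app, plus_INR, length_map, length_seq, length_flat_map, INR_list_sum.
  rewrite <- sumR_scal. f_equal. apply sumR_ext. intros j.
  rewrite length_flat_map, INR_list_sum, <- sumR_scal. apply sumR_ext. intros k.
  rewrite (flat_map_constant_length (c := 2%nat)) by reflexivity.
  rewrite mult_INR. simpl (INR 2). ring.
Qed.

Lemma final_pieces_length n m P segs delta l : (1 <= n)%nat -> (1 <= m)%nat -> 0 < delta <= 1 ->
  (forall j, (j < m)%nat -> seg_len (segs j) <= 1) ->
  NoDup l -> (forall x, In x l -> final_piece n m P segs delta x) ->
  INR (length l) <= INR m + 2 * (INR m * (2 * (6 * INR n / delta)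
                                          + 6 * INR n / delta / ln 2 * ln (1 / delta))
                      + 6 * INR n / delta / ln 2 * INR m * sumR m (fun j => seg_len (segs j))).
Proof.
  intros Hn Hm Hd Hshort Hnd Hfin.
  destruct (cut_depth_bound n m P delta Hn Hm Hd) as [K HK].
  assert (Hincl : incl l (final_piece_candidates n m P segs delta K)).
  { intros x Hx. apply final_piece_in_candidates; [|exact (Hfin x Hx)].
    intros j k i Hj. apply HK, Hshort, Hj. }
  eapply Rle_trans; [apply le_INR, (NoDup_incl_length Hnd Hincl)|].
  rewrite final_piece_candidates_length. apply Rplus_le_compat_l, Rmult_le_compat_l; [lra|].
  rewrite <- sumR_const, <- sumR_scal, <- sumR_plus. apply sumR_le. intros j _.
  pose proof (cut_levels_sum n m P delta (segs j) K Hn Hm Hd). lra.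
Qed.

Theorem lemma5 :
  exists C : R, 0 < C /\
  forall (n m : nat) (P : nat -> pt) (w : nat -> R) (S : nat -> segment)
         (delta : R),
    (forall i j, (i < n)%nat -> (j < n)%nat -> P i = P j -> i = j) ->
    (forall i, (i < n)%nat -> 0 <= w i) ->
    sumR n w = 1 ->
    (forall j j', (j < m)%nat -> (j' < m)%nat ->
       (S j = S j' \/ S j = (snd (S j'), fst (S j'))) -> j = j') ->
    sumR m (fun j => seg_len (S j)) = 1 ->
    0 < delta <= 1 / 2 ->
    forall l : list (nat * nat * nat),
      NoDup l ->
      (forall x, In x l -> final_piece n m P S delta x) ->
      INR (length l) <= C * (INR n * INR m / delta) * ln (1 / delta).
Proof.
  pose proof ln2_pos as Hln2.
  exists (37 / ln 2 + 12 / (ln 2 * ln 2)).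
  split; [apply Rplus_lt_0_compat; apply Rdiv_lt_0_compat; nra|].
  (* The weights only force [n >= 1]. *)
  intros n m P w segs delta _ _ Hw _ Hlen Hd l Hnd Hfin.
  assert (Hn : (1 <= n)%nat) by (destruct n; [unfold sumR in Hw; simpl in Hw; lra | lia]).
  assert (Hm : (1 <= m)%nat) by (destruct m; [unfold sumR in Hlen; simpl in Hlen; lra | lia]).
  assert (Hshort : forall j, (j < m)%nat -> seg_len (segs j) <= 1).
  { intros j Hj. rewrite <- Hlen.
    apply (sumR_term m (fun j => seg_len (segs j))); [intros; apply dist2_ge0 | exact Hj]. }
  pose proof (final_pieces_length n m P segs delta l Hn Hm ltac:(lra) Hshort Hnd Hfin) as Hcount.
  rewrite Hlen in Hcount.
  pose proof (le_INR _ _ Hn) as HnR. pose proof (le_INR _ _ Hm) as HmR. simpl in HnR, HmR.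
  set (A := INR n * INR m / delta). set (r := ln (1 / delta) / ln 2).
  assert (HmA : INR m <= A)
    by (unfold A; apply (Rmult_le_reg_r delta); [lra|]; field_simplify; nra).
  assert (Hr : 1 <= r).
  { unfold r. apply (Rmult_le_reg_r (ln 2)); [lra|]. field_simplify; [|lra].
    apply ln_le; [lra|]. apply (Rmult_le_reg_r delta); [lra|]. field_simplify; lra. }
  assert (HAr : A / ln 2 <= A * r / ln 2).
  { apply Rmult_le_compat_r; [apply Rlt_le, Rinv_0_lt_compat|]; nra. }
  replace (INR m * (2 * (6 * INR n / delta) + 6 * INR n / delta / ln 2 * ln (1 / delta))
           + 6 * INR n / delta / ln 2 * INR m * 1)
    with (12 * A + 6 * A * r + 6 * A / ln 2) in Hcount by (unfold r, A; field; lra).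
  replace ((37 / ln 2 + 12 / (ln 2 * ln 2)) * A * ln (1 / delta))
    with (37 * A * r + 12 * (A * r) / ln 2)
    by (unfold r; field; lra).
  nra.
Qed.
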